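(* Let $\langle S,L,\tau,\ell\rangle$ be a labelled Markov chain. Robust bisimilarity $\simeq$ is a robust bisimulation.
   Context: Labelled Markov chain $\langle S,L,\tau,\ell\rangle$: finite $S$, finite $L$, $\tau:S\to\mathcal{D}(S)$, $\ell:S\to L$, $|\ell(S)|\ge 2$. $\Omega(\mu,\nu)$ = couplings (distributions on $S\times S$ with marginals $\mu,\nu$). A (probabilistic) bisimulation is an equivalence relation $R\subseteq S\times S$ such that for all $(s,t)\in R$, $\ell(s)=\ell(t)$ and some $\omega\in\Omega(\tau(s),\tau(t))$ has $\mathrm{support}(\omega)\subseteq R$. $S^2_\Delta=\{(s,s)\}$, $S^2_1=\{(s,t)\mid\ell(s)\ne\ell(t)\}$. A policy is $P:S\times S\to\mathcal{D}(S\times S)$ with $P(s,t)\in\Omega(\tau(s),\tau(t))$ for $(s,t)\notin S^2_1$ and $P(s,t)$ the point mass at $(s,t)$ for $(s,t)\in S^2_1$; $\mathcal{P}$ is the set of policies; $P$ induces the Markov chain $\langle S\times S,P\rangle$. Robust bisimilarity: $s\simeq t$ iff some $P\in\mathcal{P}$ makes $(s,t)$ reach $S^2_\Delta$ with probability $1$ in $\langle S\times S,P\rangle$. For a policy $P$, a set $R\subseteq S\times S$ supports a path $(u_1,v_1)\dots(u_n,v_n)$ of $\langle S\times S,P\rangle$ if $(u_i,v_i)\in R$ and $\mathrm{support}(P(u_i,v_i))\subseteq R$ for all $1\le i\le n$. A robust bisimulation is a bisimulation $R$ such that for every $(s,t)\in R$ there is $P\in\mathcal{P}$ such that $R$ supports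 a path from $(s,t)$ to (a pair in) $S^2_\Delta$ in $\langle S\times S,P\rangle$. *)

From HB Require Import structures.
From mathcomp Require Import all_boot all_order all_algebra.
From mathcomp Require Import reals.
Set Implicit Arguments. Unset Strict Implicit. Unset Printing Implicit Defensive.
Import Order.TTheory GRing.Theory Num.Theory.
Local Open Scope ring_scope.

Definition is_distr (R : realType) (T : finType) (mu : T -> R) : Prop :=
  (forall x, 0 <= mu x) /\ \sum_(x : T) mu x = 1.

Definition coupling (R : realType) (S : finType) (mu nu : S -> R)
  (omega : S * S -> R) : Prop :=
  is_distr omega /\
  (forall s, \sum_(t : S) omega (s, t) = mu s) /\
  (forall t, \sum_(s : S) omega (s, t) = nu t).

Definition dirac (R : realType) (T : finType) (x : T) : T -> R :=
  fun y => if y == x then 1 else 0.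

Definition policy (R : realType) (S : finType) (L : eqType)
  (tau : S -> S -> R) (ell : S -> L) (P : S * S -> S * S -> R) : Prop :=
  forall s t,
    (ell s <> ell t -> P (s, t) = @dirac R _ (s, t)) /\
    (ell s = ell t -> coupling (tau s) (tau t) (P (s, t))).

Definition diagS (S : finType) (u : S * S) : bool := u.1 == u.2.

Fixpoint reach_within (R : realType) (S : finType) (P : S * S -> S * S -> R)
  (n : nat) (u : S * S) : R :=
  if diagS u then 1 else
  match n with
  | 0 => 0
  | n'.+1 => \sum_(v : S * S) P u v * reach_within P n' v
  end.

(* u reaches S^2_Delta with probability 1: the probability of eventually
   reaching (the supremum of the nondecreasing, <= 1, sequence of
   probabilities of reaching within n steps) equals 1. *)
Definition reaches_diag_as (R : realType) (S : finType)
  (P : S * S -> S * S -> R) (u : S * S) : Prop :=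
  forall e : R, 0 < e -> exists n, 1 - e < reach_within P n u.

Definition robust_bisimilar (R : realType) (S : finType) (L : eqType)
  (tau : S -> S -> R) (ell : S -> L) (s t : S) : Prop :=
  exists P, policy tau ell P /\ reaches_diag_as P (s, t).

Definition equivalence_rel (S : Type) (Rel : S -> S -> Prop) : Prop :=
  (forall s, Rel s s) /\ (forall s t, Rel s t -> Rel t s) /\
  (forall s t u, Rel s t -> Rel t u -> Rel s u).

Definition bisimulation (R : realType) (S : finType) (L : eqType)
  (tau : S -> S -> R) (ell : S -> L) (Rel : S -> S -> Prop) : Prop :=
  equivalence_rel Rel /\
  forall s t, Rel s t ->
    ell s = ell t /\
    exists omega, coupling (tau s) (tau t) omega /\
      (forall u v, 0 < omega (u, v) -> Rel u v).

Definition supports_path (R : realType) (S : finType)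
  (P : S * S -> S * S -> R) (Rel : S -> S -> Prop)
  (n : nat) (p : nat -> S * S) : Prop :=
  (forall i, (i < n)%N -> 0 < P (p i) (p i.+1)) /\
  (forall i, (i <= n)%N ->
     Rel (p i).1 (p i).2 /\ (forall v, 0 < P (p i) v -> Rel v.1 v.2)).

Definition robust_bisimulation (R : realType) (S : finType) (L : eqType)
  (tau : S -> S -> R) (ell : S -> L) (Rel : S -> S -> Prop) : Prop :=
  bisimulation tau ell Rel /\
  forall s t, Rel s t ->
    exists P, policy tau ell P /\
      exists (n : nat) (p : nat -> S * S),
        p 0%N = (s, t) /\ diagS (p n) /\ supports_path P Rel n p.

(* Zero-one law: if a set C of pairs is closed under the successors of a policy
   and the diagonal is reachable with positive probability from every pair of C,
   then it is reached almost surely from C, because on the finite state space the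
   escape probability within a common horizon is bounded by some c < 1, hence by
   c^k within k horizons.

   Averaging, at each pair u, the witness policies of all pairs that reach the
   diagonal almost surely from u yields one policy whose support never leaves
   robust bisimilarity and which reaches the diagonal with positive probability
   from every robustly bisimilar pair; it provides the couplings and the supported
   paths. Symmetry swaps the components of a policy. For transitivity, at (x, z)
   one averages over all middle states y the composition (gluing along tau y) of
   the couplings at (x, y) and (y, z); a path to the diagonal from (x, y) lifts to
   a path from (x, z), and the zero-one law applies. *)

From mathcomp Require Import all_boot all_order all_algebra.
From mathcomp Require Import reals boolp lra.
Import Order.TTheory GRing.Theory Num.Theory.
Set Implicit Arguments. Unset Strict Implicit. Unset Printing Implicit Defensive.
Local Open Scope ring_scope.

Lemma sumr_gt0_witness (R : realDomainType) (I : finType) (P : pred I) (F : I -> R) :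
  0 < \sum_(i | P i) F i -> exists2 i, P i & 0 < F i.
Proof.
move=> sum_gt0; apply: contrapT => /forall2NP noF; move: sum_gt0.
rewrite ltNge sumr_le0 // => i Pi; rewrite leNgt.
by have [/(_ Pi)|/negP] := noF i.
Qed.

Lemma ex_lt_uniform_bound (R : realDomainType) (T : finType) (A : T -> Prop)
    (f : T -> R) (a b : R) :
  a < b -> (forall x, A x -> f x < b) ->
  exists c, [/\ a <= c, c < b & forall x, A x -> f x <= c].
Proof.
move=> ab fb; exists (\big[Num.max/a]_(x | `[< A x >]) f x); split.
- by rewrite bigmax_idl le_max lexx.
- by apply/bigmax_ltP; split => // x /asboolP; apply: fb.
- by move=> x Ax; apply: le_bigmax_cond; apply/asboolP.
Qed.

Lemma expr_bernoulli (R : realFieldType) (q : R) k :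
  0 <= q <= 1 -> q ^+ k * (1 + k%:R * (1 - q)) <= 1.
Proof.
case/andP=> q0 q1; elim: k => [|k IH]; first by rewrite expr0 mul0r addr0 mul1r.
rewrite exprS -mulrA mulrCA; apply: le_trans IH; rewrite ler_wpM2l ?exprn_ge0 //.
rewrite -addn1 natrD.
have : 0 <= (1 - q) ^+ 2 * (k%:R + 1) by rewrite mulr_ge0 ?sqr_ge0 ?addr_ge0.
nra.
Qed.

Lemma ex_expr_lt (R : archiRealFieldType) (q e : R) :
  0 <= q < 1 -> 0 < e -> exists k, q ^+ k < e.
Proof.
case/andP=> q0 q1 e0; have d0 : 0 < e * (1 - q) by rewrite mulr_gt0 // subr_gt0.
set k := Num.Def.archi_bound (e * (1 - q))^-1; exists k.
have kd : 1 < k%:R * (e * (1 - q)).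
  by rewrite -[X in X < _](mulVf (lt0r_neq0 d0)) ltr_pM2r // archi_boundP // invr_ge0 ltW.
have q01 : 0 <= q <= 1 by rewrite q0 ltW.
have := expr_bernoulli k q01.
have := exprn_ge0 k q0; have : 0 <= k%:R :> R by [].
move: kd; set K := k%:R; set y := q ^+ k.
nra.
Qed.

Section Couplings.
Variables (R : realType) (S : finType).
Implicit Types (mu nu rho : S -> R) (w : S * S -> R).

Lemma coupling_ge0 mu nu w : coupling mu nu w -> forall p, 0 <= w p.
Proof. by case=> -[]. Qed.

Lemma coupling_le_fst mu nu w : coupling mu nu w -> forall a b, w (a, b) <= mu a.
Proof.
move=> cw a b; have [_ [<- _]] := cw; rewrite (bigD1 b) //= lerDl.
by apply: sumr_ge0 => c _; apply: coupling_ge0 cw _.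
Qed.

Lemma coupling_le_snd mu nu w : coupling mu nu w -> forall a b, w (a, b) <= nu b.
Proof.
move=> cw a b; have [_ [_ <-]] := cw; rewrite (bigD1 a) //= lerDl.
by apply: sumr_ge0 => c _; apply: coupling_ge0 cw _.
Qed.

Lemma coupling_distr_fst mu nu w : coupling mu nu w -> is_distr mu.
Proof.
move=> cw; have [[w0 w1] [wl _]] := cw; split=> [a|].
  by apply: le_trans (coupling_le_fst cw a a); apply: w0.
under eq_bigr do rewrite -wl.
by rewrite pair_bigA -w1; apply: eq_bigr => -[].
Qed.

Lemma coupling_of_marginals mu nu w : is_distr mu ->
  (forall p, 0 <= w p) -> (forall s, \sum_t w (s, t) = mu s) ->
  (forall t, \sum_s w (s, t) = nu t) -> coupling mu nu w.
Proof.
move=> [_ mu1] w0 wl wr; split=> //; split=> //.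
rewrite -mu1; under [RHS]eq_bigr do rewrite -wl.
by rewrite pair_bigA; apply: eq_bigr => -[].
Qed.

Definition diag_coupling mu : S * S -> R :=
  fun p => if p.1 == p.2 then mu p.1 else 0.

Definition product_coupling mu nu : S * S -> R := fun p => mu p.1 * nu p.2.

Definition mix (I : finType) (A : pred I) (W : I -> S * S -> R) w0 : S * S -> R :=
  if #|A| == 0%N then w0 else fun p => #|A|%:R^-1 * \sum_(i in A) W i p.

(* Gluing of couplings of [(mu, nu)] and [(nu, rho)]; terms with [nu b = 0]
   vanish since [x / 0 = 0]. *)
Definition glue nu w1 w2 : S * S -> R :=
  fun p => \sum_b w1 (p.1, b) * w2 (b, p.2) / nu b.

Lemma coupling_diag mu : is_distr mu -> coupling mu mu (diag_coupling mu).
Proof.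
move=> mu_distr; have [mu0 _] := mu_distr.
apply: coupling_of_marginals => // [p|s|t]; rewrite /diag_coupling.
- by case: ifP.
- rewrite (bigD1 s) //= eqxx big1 ?addr0 // => t.
  by rewrite eq_sym => /negbTE ->.
- by rewrite (bigD1 t) //= eqxx big1 ?addr0 // => s /negbTE ->.
Qed.

Lemma diag_coupling_gt0 mu p : 0 < diag_coupling mu p -> p.1 = p.2.
Proof. by rewrite /diag_coupling; case: eqP => // _; rewrite ltxx. Qed.

Lemma coupling_product mu nu :
  is_distr mu -> is_distr nu -> coupling mu nu (product_coupling mu nu).
Proof.
move=> mu_distr [nu0 nu1]; have [mu0 mu1] := mu_distr.
apply: coupling_of_marginals => // [p|s|t]; rewrite /product_coupling /=.
- exact: mulr_ge0.
- by rewrite -mulr_sumr nu1 mulr1.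
- by rewrite -mulr_suml mu1 mul1r.
Qed.

Lemma coupling_mix (I : finType) (A : pred I) W w0 mu nu :
  coupling mu nu w0 -> (forall i, A i -> coupling mu nu (W i)) ->
  coupling mu nu (mix A W w0).
Proof.
rewrite /mix; case: eqP => // /eqP A0 cw0 cW.
have mean_const (F : I -> R) x : (forall i, A i -> F i = x) ->
    #|A|%:R^-1 * \sum_(i in A) F i = x.
  move=> Fx; rewrite (eq_bigr _ Fx) sumr_const -[x *+ _]mulr_natl mulrA.
  by rewrite mulVf ?mul1r // pnatr_eq0.
apply: coupling_of_marginals (coupling_distr_fst cw0) _ _ _ => [p|s|t].
- rewrite mulr_ge0 ?invr_ge0 ?ler0n //.
  by apply: sumr_ge0 => i Ai; apply: coupling_ge0 (cW i Ai) _.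
- rewrite -mulr_sumr exchange_big; apply: mean_const => i Ai.
  by have [_ []] := cW i Ai.
- rewrite -mulr_sumr exchange_big; apply: mean_const => i Ai.
  by have [_ []] := cW i Ai.
Qed.

Lemma mix_gt0 (I : finType) (A : pred I) W w0 p i :
  A i -> 0 < W i p -> (forall j, A j -> 0 <= W j p) -> 0 < mix A W w0 p.
Proof.
move=> Ai Wi W0; have A0 : #|A| != 0%N by rewrite -lt0n; apply/card_gt0P; exists i.
rewrite /mix (negbTE A0) mulr_gt0 ?invr_gt0 ?ltr0n ?lt0n // (bigD1 i) //= ltr_pwDl //.
by apply: sumr_ge0 => j /andP[Aj _]; apply: W0.
Qed.

Lemma mix_supp (I : finType) (A : pred I) W w0 p i :
  A i -> 0 < mix A W w0 p -> exists2 j, A j & 0 < W j p.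
Proof.
move=> Ai; have A0 : #|A| != 0%N by rewrite -lt0n; apply/card_gt0P; exists i.
rewrite /mix (negbTE A0) pmulr_rgt0 ?invr_gt0 ?ltr0n ?lt0n //.
exact: sumr_gt0_witness.
Qed.

Section Glue.
Variables (mu nu rho : S -> R) (w1 w2 : S * S -> R).
Hypotheses (cw1 : coupling mu nu w1) (cw2 : coupling nu rho w2).

Lemma glue_term_ge0 a b c : 0 <= w1 (a, b) * w2 (b, c) / nu b.
Proof.
rewrite !mulr_ge0 ?invr_ge0 ?(coupling_ge0 cw1) ?(coupling_ge0 cw2) //.
exact: (proj1 (coupling_distr_fst cw2)).
Qed.

Lemma coupling_glue : coupling mu rho (glue nu w1 w2).
Proof.
have [_ [w1l w1r]] := cw1; have [_ [w2l w2r]] := cw2.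
apply: coupling_of_marginals (coupling_distr_fst cw1) _ _ _ => [p|a|c].
- by apply: sumr_ge0 => b _; apply: glue_term_ge0.
- rewrite exchange_big -w1l; apply: eq_bigr => b _ /=.
  rewrite -mulr_suml -mulr_sumr w2l.
  have [nb0|nb0] := eqVneq (nu b) 0; last by rewrite mulfK.
  apply/eqP; rewrite nb0 invr0 mulr0 eq_sym eq_le (coupling_ge0 cw1) andbT -nb0.
  exact: coupling_le_snd cw1 _ _.
- rewrite exchange_big -w2r; apply: eq_bigr => b _ /=.
  rewrite -!mulr_suml w1r.
  have [nb0|nb0] := eqVneq (nu b) 0; last by rewrite mulrAC divff ?mul1r.
  apply/eqP; rewrite nb0 invr0 mulr0 eq_sym eq_le (coupling_ge0 cw2) andbT -nb0.
  exact: coupling_le_fst cw2 _ _.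
Qed.

Lemma glue_gt0 a b c : 0 < w1 (a, b) -> 0 < w2 (b, c) -> 0 < glue nu w1 w2 (a, c).
Proof.
move=> w1ab w2bc; have nb : 0 < nu b := lt_le_trans w1ab (coupling_le_snd cw1 a b).
rewrite /glue (bigD1 b) //= ltr_pwDl ?divr_gt0 ?mulr_gt0 //.
by apply: sumr_ge0 => b' _; apply: glue_term_ge0.
Qed.

Lemma glue_supp p : 0 < glue nu w1 w2 p -> exists b, 0 < w1 (p.1, b) /\ 0 < w2 (b, p.2).
Proof.
case/sumr_gt0_witness => b _; rewrite lt0r !mulf_eq0 !negb_or => /andP[/andP[/andP[w1b w2b] _] _].
by exists b; rewrite !lt0r w1b w2b (coupling_ge0 cw1) (coupling_ge0 cw2).
Qed.

End Glue.

End Couplings.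

Lemma dirac_distr (R : realType) (T : finType) (x : T) : is_distr (@dirac R T x).
Proof.
split=> [y|]; first by rewrite /dirac; case: ifP.
by rewrite (bigD1 x) //= /dirac eqxx big1 ?addr0 // => y /negbTE ->.
Qed.

Section Reachability.
Variables (R : realType) (S : finType) (L : eqType) (tau : S -> S -> R) (ell : S -> L).
Local Notation pair := (S * S)%type.
Implicit Types (P : pair -> pair -> R) (u v : pair) (C : pair -> Prop).

Definition succ_closed P C := forall u v, C u -> ~~ diagS u -> 0 < P u v -> C v.

(* [survival P n f u] is the expectation of [f] at time [n], restricted to the
   paths from [u] that avoid the diagonal up to time [n]. *)
Fixpoint survival P n (f : pair -> R) u : R :=
  if diagS u then 0 else
  if n is n'.+1 then \sum_v P u v * survival P n' f v else f u.

Definition escape P n u := survival P n (fun=> 1) u.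

Lemma survival_add P m n f u :
  survival P (m + n) f u = survival P m (survival P n f) u.
Proof.
elim: m u => [|m IH] u /=; case: ifP => // diag_u.
  by case: n => [|n] /=; rewrite diag_u.
by apply: eq_bigr => v _; rewrite IH.
Qed.

Inductive hits_diag P : nat -> pair -> Prop :=
| hits_now n u : diagS u -> hits_diag P n u
| hits_step n u v : 0 < P u v -> hits_diag P n v -> hits_diag P n.+1 u.

Lemma hits_diag_mono P n m u : hits_diag P n u -> (n <= m)%N -> hits_diag P m u.
Proof.
move=> hits_u; elim: hits_u m => {n u} [n u diag_u|n u v Puv _ IH] m.
  by move=> _; apply: hits_now.
by case: m => // m nm; apply: hits_step Puv (IH m nm).
Qed.

Lemma hits_diag_uniform P C : (forall u, C u -> exists n, hits_diag P n u) ->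
  exists N, forall u, C u -> hits_diag P N u.
Proof.
move=> hitsC; have ex_n u : exists n, C u -> hits_diag P n u.
  have [Cu|nCu] := pselect (C u); last by exists 0%N.
  by have [n ?] := hitsC u Cu; exists n.
have [n hits_n] := choice ex_n.
exists (\max_u n u)%N => u Cu; apply: hits_diag_mono (hits_n u Cu) _.
exact: leq_bigmax.
Qed.

Lemma hits_diag_transfer P P' (A : pair -> Prop) n u :
  (forall u v, A u -> ~~ diagS u -> 0 < P u v -> A v /\ 0 < P' u v) ->
  A u -> hits_diag P n u -> hits_diag P' n u.
Proof.
move=> PP' Au hits_u; elim: hits_u Au => {n u} [n u diag_u|n u v Puv _ IH] Au.
  exact: hits_now.
have [diag_u|ndiag_u] := boolP (diagS u); first exact: hits_now.
have [Av P'uv] := PP' u v Au ndiag_u Puv.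
exact: hits_step P'uv (IH Av).
Qed.

Lemma hits_diag_path P n u : hits_diag P n u -> exists m (p : nat -> pair),
  [/\ p 0%N = u, diagS (p m) & forall i, (i < m)%N -> 0 < P (p i) (p i.+1)].
Proof.
elim=> {n u} [n u diag_u|n u v Puv _ [m [p [p0 pm pP]]]].
  by exists 0%N, (fun=> u).
exists m.+1, (fun i => if i is i'.+1 then p i' else u).
by split=> // -[|i] lt_im /=; [rewrite p0 | apply: pP].
Qed.

Section Policy.
Variable P : pair -> pair -> R.
Hypothesis policyP : policy tau ell P.

Lemma policy_distr u : is_distr (P u).
Proof.
case: u => s t; have [Pdiff Psame] := policyP s t.
have [/Psame [] //|/eqP ell_st] := eqVneq (ell s) (ell t).
by rewrite Pdiff //; apply: dirac_distr.
Qed.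

Lemma policy_ge0 u v : 0 <= P u v.
Proof. by have [] := policy_distr u. Qed.

Lemma policy_sum1 u : \sum_v P u v = 1.
Proof. by have [] := policy_distr u. Qed.

Lemma survival_ge0 n f u : (forall v, 0 <= f v) -> 0 <= survival P n f u.
Proof.
move=> f0; elim: n u => [|n IH] u /=; case: ifP => // _.
by apply: sumr_ge0 => v _; rewrite mulr_ge0 ?policy_ge0.
Qed.

Lemma escape_le1 n u : escape P n u <= 1.
Proof.
rewrite /escape; elim: n u => [|n IH] u /=; case: ifP => // _.
rewrite -[leRHS](policy_sum1 u); apply: ler_sum => v _.
by rewrite ler_piMr ?policy_ge0.
Qed.

Lemma survival_le C n f c u : succ_closed P C ->
  (forall v, C v -> 0 <= f v <= c) -> C u -> survival P n f u <= c * escape P n u.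
Proof.
rewrite /escape => closedC; elim: n f c u => [|n IH] f c u fc Cu /=.
  by case: ifP => _; rewrite ?mulr0 // mulr1; case/andP: (fc u Cu).
case: ifP => diag_u; rewrite ?mulr0 // mulr_sumr; apply: ler_sum => v _.
rewrite mulrCA; have [<-|Puv] := eqVneq 0 (P u v); first by rewrite !mul0r.
have {}Puv : 0 < P u v by rewrite lt_def eq_sym Puv policy_ge0.
by rewrite ler_pM2l // IH //; apply: closedC Puv; rewrite ?diag_u.
Qed.

Lemma escape_le_add m n u : escape P (m + n) u <= escape P m u.
Proof.
rewrite /escape survival_add -[leRHS]mul1r.
apply: (survival_le (C := fun=> True)) => // v _.
by rewrite survival_ge0 ?escape_le1.
Qed.

Lemma escapeS_ge n u v : ~~ diagS u -> P u v * escape P n v <= escape P n.+1 u.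
Proof.
move=> diag_u; rewrite /escape /= (negbTE diag_u) (bigD1 v) //= lerDl.
by apply: sumr_ge0 => w _; rewrite mulr_ge0 ?policy_ge0 ?survival_ge0.
Qed.

Lemma escapeE n u : escape P n u = 1 - reach_within P n u.
Proof.
rewrite /escape; elim: n u => [|n IH] u /=; case: ifP => _; rewrite ?subrr ?subr0 //.
rewrite -[in RHS](policy_sum1 u) -sumrB; apply: eq_bigr => v _.
by rewrite IH mulrBr mulr1.
Qed.

Lemma reaches_diag_asE u :
  reaches_diag_as P u <-> forall e, 0 < e -> exists n, escape P n u < e.
Proof.
by split=> reach_u e e0; have [n ltn] := reach_u e e0; exists n;
  move: ltn; rewrite escapeE; lra.
Qed.

Lemma reach_within_ge0 n u : 0 <= reach_within P n u.
Proof.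
elim: n u => [|n IH] u /=; case: ifP => // _.
by apply: sumr_ge0 => v _; rewrite mulr_ge0 ?policy_ge0.
Qed.

Lemma reach_within_gt0P n u : 0 < reach_within P n u <-> hits_diag P n u.
Proof.
split.
  elim: n u => [|n IH] u /=; case: ifP => [diag_u _|_]; try exact: hits_now.
    by rewrite ltxx.
  case/sumr_gt0_witness => v _; rewrite lt0r mulf_eq0 negb_or => /andP[/andP[Puv rv] _].
  apply: (hits_step (v := v)); first by rewrite lt0r Puv policy_ge0.
  by apply: IH; rewrite lt0r rv reach_within_ge0.
elim=> {n u} [n u diag_u|n u v Puv _ IH]; first by case: n => /=; rewrite diag_u.
rewrite /=; case: ifP => // _; rewrite (bigD1 v) //= ltr_pwDl ?mulr_gt0 //.
by apply: sumr_ge0 => w _; rewrite mulr_ge0 ?policy_ge0 ?reach_within_ge0.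
Qed.

Lemma reaches_diag_as_hits u : reaches_diag_as P u -> exists n, hits_diag P n u.
Proof.
move=> /(_ 1 ltr01) [n]; rewrite subrr => reach_n.
by exists n; apply/reach_within_gt0P.
Qed.

Lemma hits_diag_label n u : hits_diag P n u -> ell u.1 = ell u.2.
Proof.
elim=> {n u} [n [s t] /eqP /= -> //|n [s t] v Puv _ IH].
have [//|/eqP ell_st] := eqVneq (ell s) (ell t).
move: Puv; rewrite (proj1 (policyP s t) ell_st) /dirac.
by case: eqP => [v_st _|_]; [move: IH; rewrite v_st | rewrite ltxx].
Qed.

Lemma reaches_diag_as_succ u v :
  reaches_diag_as P u -> ~~ diagS u -> 0 < P u v -> reaches_diag_as P v.
Proof.
move=> /reaches_diag_asE reach_u diag_u Puv; apply/reaches_diag_asE => e e0.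
have [m esc_m] := reach_u (e * P u v) (mulr_gt0 e0 Puv).
exists m; rewrite -(ltr_pM2l Puv) [P u v * e]mulrC.
apply: le_lt_trans esc_m; apply: le_trans (escapeS_ge m v diag_u) _.
by rewrite -addn1 escape_le_add.
Qed.

Lemma escape_geometric C N c : succ_closed P C -> 0 <= c ->
  (forall u, C u -> escape P N u <= c) -> forall k u, C u -> escape P (k * N) u <= c ^+ k.
Proof.
move=> closedC c0 escN; elim=> [|k IH] u Cu.
  by rewrite mul0n expr0 escape_le1.
rewrite mulSn /escape survival_add exprSr.
apply: le_trans (survival_le N (c := c ^+ k) closedC _ Cu) _ => [v Cv|].
  by rewrite survival_ge0 //; apply: IH.
by rewrite ler_wpM2l ?exprn_ge0 ?escN.
Qed.

Lemma reaches_diag_as_closed C : succ_closed P C ->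
  (forall u, C u -> exists n, hits_diag P n u) -> forall u, C u -> reaches_diag_as P u.
Proof.
move=> closedC /hits_diag_uniform [N hitsN].
have escN_lt1 u : C u -> escape P N u < 1.
  by move=> /hitsN /reach_within_gt0P; rewrite escapeE; lra.
have [c [c0 c1 escN]] := ex_lt_uniform_bound ltr01 escN_lt1.
move=> u Cu; apply/reaches_diag_asE => e e0.
have [k ck] : exists k, c ^+ k < e by apply: ex_expr_lt; rewrite ?c0.
by exists (k * N)%N; apply: le_lt_trans (escape_geometric closedC c0 escN k Cu) ck.
Qed.

End Policy.

End Reachability.

Section RobustBisimilarity.
Variables (R : realType) (S : finType) (L : eqType) (tau : S -> S -> R) (ell : S -> L).
Hypothesis tau_distr : forall s, is_distr (tau s).
Local Notation pair := (S * S)%type.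
Local Notation sim := (robust_bisimilar tau ell).

Definition extend_policy (c : pair -> pair -> R) : pair -> pair -> R :=
  fun u => if diagS u then diag_coupling (tau u.1)
           else if ell u.1 == ell u.2 then c u else @dirac R _ u.

Lemma policy_extend c :
    (forall u, ~~ diagS u -> ell u.1 = ell u.2 -> coupling (tau u.1) (tau u.2) (c u)) ->
  policy tau ell (extend_policy c).
Proof.
move=> cP s t; rewrite /extend_policy; split=> ell_st.
  have ndiag : ~~ diagS (s, t) by apply/eqP => /= st; apply: ell_st; rewrite st.
  by rewrite (negbTE ndiag) /=; case: eqP.
have [/eqP /= <-|ndiag] := boolP (diagS (s, t)); first exact: coupling_diag.
by rewrite ell_st eqxx; apply: (cP (s, t)).
Qed.

Lemma extend_policy_diag c u : diagS u -> extend_policy c u = diag_coupling (tau u.1).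
Proof. by rewrite /extend_policy => ->. Qed.

Lemma extend_policy_offdiag c a b :
  ~~ diagS (a, b) -> ell a = ell b -> extend_policy c (a, b) = c (a, b).
Proof. by rewrite /extend_policy => /negbTE -> /= ->; rewrite eqxx. Qed.

Definition product_policy : pair -> pair -> R :=
  extend_policy (fun u => product_coupling (tau u.1) (tau u.2)).

Lemma policy_product : policy tau ell product_policy.
Proof. by apply: policy_extend => u _ _; apply: coupling_product. Qed.

Lemma reaches_sim P u : policy tau ell P -> reaches_diag_as P u -> sim u.1 u.2.
Proof. by case: u => s t policyP reach_st; exists P. Qed.

Lemma sim_label s t : sim s t -> ell s = ell t.
Proof.
by case=> P [policyP /(reaches_diag_as_hits policyP) [n /(hits_diag_label policyP)]].
Qed.

Lemma sim_refl s : sim s s.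
Proof.
exists product_policy; split=> [|e e0]; first exact: policy_product.
by exists 0%N; rewrite /= /diagS eqxx; lra.
Qed.

Definition swap_policy (P : pair -> pair -> R) : pair -> pair -> R :=
  fun u v => P (swap_pair u) (swap_pair v).

Lemma sum_swap_pair (F : pair -> R) : \sum_v F (swap_pair v) = \sum_v F v.
Proof. by rewrite [RHS](reindex_inj (can_inj swap_pairK)). Qed.

Lemma diagS_swap (u : pair) : diagS (swap_pair u) = diagS u.
Proof. exact: eq_sym. Qed.

Lemma policy_swap P : policy tau ell P -> policy tau ell (swap_policy P).
Proof.
move=> policyP s t; have [Pdiff Psame] := policyP t s; split=> ell_st.
  apply/funext => -[a b]; rewrite /swap_policy /= Pdiff; last by move/esym.
  by rewrite /dirac !xpair_eqE andbC.
have [[P0 P1] [Pl Pr]] := Psame (esym ell_st).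
split; first by split=> [v|]; [apply: P0 | rewrite sum_swap_pair].
by split=> a; [apply: Pr | apply: Pl].
Qed.

Lemma reach_within_swap P n u :
  reach_within (swap_policy P) n u = reach_within P n (swap_pair u).
Proof.
elim: n u => [|n IH] u /=; rewrite diagS_swap //; case: ifP => // _.
by rewrite -[RHS]sum_swap_pair; apply: eq_bigr => v _; rewrite IH.
Qed.

Lemma sim_sym s t : sim s t -> sim t s.
Proof.
case=> P [policyP reach_st]; exists (swap_policy P); split=> [|e e0].
  exact: policy_swap.
by have [n ?] := reach_st e e0; exists n; rewrite reach_within_swap.
Qed.

Lemma ex_witness_policy w :
  exists P, policy tau ell P /\ (sim w.1 w.2 -> reaches_diag_as P w).
Proof.
have [[P [policyP reachP]]|nsim] := pselect (sim w.1 w.2).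
  by exists P; split=> // _; case: w reachP.
by exists product_policy; split=> [|/nsim //]; apply: policy_product.
Qed.

Definition witness w : pair -> pair -> R := projT1 (cid (ex_witness_policy w)).

Lemma witness_policy w : policy tau ell (witness w).
Proof. exact: (proj1 (projT2 (cid (ex_witness_policy w)))). Qed.

Lemma witness_reaches w : sim w.1 w.2 -> reaches_diag_as (witness w) w.
Proof. exact: (proj2 (projT2 (cid (ex_witness_policy w)))). Qed.

Definition witnesses_from u : pred pair := fun w => `[< reaches_diag_as (witness w) u >].

(* The witness of [w] is included at [u] only if it reaches the diagonal almost
   surely from [u], so that the support of [sim_policy] never leaves [sim]. *)
Definition sim_policy : pair -> pair -> R := extend_policy (fun u =>
  mix (witnesses_from u) (fun w => witness w u) (product_coupling (tau u.1) (tau u.2))).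

Lemma policy_sim : policy tau ell sim_policy.
Proof.
apply: policy_extend => -[a b] _ /= ell_ab.
apply: coupling_mix => [|w _]; first exact: coupling_product.
exact: (proj2 (witness_policy w a b) ell_ab).
Qed.

Lemma sim_policy_coupling s t : sim s t -> coupling (tau s) (tau t) (sim_policy (s, t)).
Proof. by move=> /sim_label ell_st; apply: (proj2 (policy_sim s t)). Qed.

Lemma sim_policy_succ u v : sim u.1 u.2 -> 0 < sim_policy u v -> sim v.1 v.2.
Proof.
case: u => a b /= sim_ab; have [diag_ab|ndiag] := boolP (diagS (a, b)).
  by rewrite /sim_policy extend_policy_diag // => /diag_coupling_gt0 ->; apply: sim_refl.
rewrite /sim_policy extend_policy_offdiag ?(sim_label sim_ab) //.
have from_ab : witnesses_from (a, b) (a, b) by apply/asboolP; apply: witness_reaches.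
case/(mix_supp from_ab) => w /asboolP reach_w witness_v.
apply: reaches_sim (witness_policy w) _.
exact: (reaches_diag_as_succ (witness_policy w) reach_w ndiag witness_v).
Qed.

Lemma sim_policy_hits u : sim u.1 u.2 -> exists n, hits_diag sim_policy n u.
Proof.
move=> sim_u; have [n hits_n] := reaches_diag_as_hits (witness_policy u) (witness_reaches sim_u).
exists n; apply: (hits_diag_transfer (A := reaches_diag_as (witness u))) hits_n;
  last exact: witness_reaches.
move=> [a b] v reach_ab ndiag witness_v.
split; first exact: (reaches_diag_as_succ (witness_policy u) reach_ab ndiag witness_v).
have ell_ab := sim_label (reaches_sim (witness_policy u) reach_ab).
rewrite /sim_policy extend_policy_offdiag //.
have from_u : witnesses_from (a, b) u by apply/asboolP.
apply: mix_gt0 from_u witness_v _ => w _.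
exact: (policy_ge0 (witness_policy w)).
Qed.

Definition middles u : pred S := fun y => `[< sim u.1 y /\ sim y u.2 >].

Definition glued_policy : pair -> pair -> R := extend_policy (fun u =>
  mix (middles u) (fun y => glue (tau y) (sim_policy (u.1, y)) (sim_policy (y, u.2)))
    (product_coupling (tau u.1) (tau u.2))).

Lemma policy_glued : policy tau ell glued_policy.
Proof.
apply: policy_extend => -[a b] _ _.
apply: coupling_mix => [|y /asboolP [ay yb]]; first exact: coupling_product.
exact: coupling_glue (sim_policy_coupling ay) (sim_policy_coupling yb).
Qed.

Lemma glued_policy_gt0 x y z a b c : sim x y -> sim y z -> ~~ diagS (x, z) ->
  0 < sim_policy (x, y) (a, b) -> 0 < sim_policy (y, z) (b, c) ->
  0 < glued_policy (x, z) (a, c).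
Proof.
move=> xy yz ndiag ab bc; rewrite /glued_policy extend_policy_offdiag //; last first.
  by rewrite (sim_label xy) (sim_label yz).
have mid_y : middles (x, z) y by apply/asboolP.
apply: mix_gt0 mid_y _ _ => [|y' /asboolP [xy' y'z]] /=.
  exact: (glue_gt0 (sim_policy_coupling xy) (sim_policy_coupling yz) ab bc).
exact: (coupling_ge0 (coupling_glue (sim_policy_coupling xy') (sim_policy_coupling y'z))) _.
Qed.

Lemma glued_policy_closed :
  succ_closed glued_policy (fun u => exists y, sim u.1 y /\ sim y u.2).
Proof.
move=> [x z] v [y [xy yz]] ndiag.
rewrite /glued_policy extend_policy_offdiag ?(sim_label xy) ?(sim_label yz) //.
have mid_y : middles (x, z) y by apply/asboolP.
case/(mix_supp mid_y) => y' /asboolP [xy' y'z].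
case/(glue_supp (sim_policy_coupling xy') (sim_policy_coupling y'z)) => b [ab bc].
exists b; split; first exact: (sim_policy_succ (u := (x, y'))) ab.
exact: (sim_policy_succ (u := (y', z))) bc.
Qed.

(* Each step (x, y) -> (a, b) of [sim_policy] is matched by a step (y, z) -> (b, c)
   of [sim_policy], and the two glue into a step (x, z) -> (a, c); once x = y, a
   [sim_policy]-path from (x, z) is itself a [glued_policy]-path. *)
Lemma hits_diag_glued n u z : hits_diag sim_policy n u ->
  sim u.1 u.2 -> sim u.2 z -> exists m, hits_diag glued_policy m (u.1, z).
Proof.
move=> hits_u; elim: hits_u z => {n u} [n [x y] /eqP /= <-|n [x y] [a b] Pab _ IH] z /=
  xy yz.
  have [m hits_m] := sim_policy_hits (u := (x, z)) yz; exists m.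
  apply: (hits_diag_transfer (A := fun u => sim u.1 u.2)) hits_m => // -[a b] w ab ndiag Pw.
  split; first exact: sim_policy_succ ab Pw.
  case: w Pw => c d Pw; apply: (glued_policy_gt0 (sim_refl a) ab ndiag _ Pw).
  rewrite /sim_policy extend_policy_diag /diagS ?eqxx // /diag_coupling /= eqxx.
  exact: lt_le_trans Pw (coupling_le_fst (sim_policy_coupling ab) _ _).
have [diag_xz|ndiag] := boolP (diagS (x, z)); first by exists 0%N; apply: hits_now.
have ab : sim a b := sim_policy_succ (u := (x, y)) xy Pab.
have [c _ bc] : exists2 c, true & 0 < sim_policy (y, z) (b, c).
  apply: sumr_gt0_witness; have [_ [-> _]] := sim_policy_coupling yz.
  exact: lt_le_trans Pab (coupling_le_snd (sim_policy_coupling xy) _ _).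
have [m hits_m] := IH c ab (sim_policy_succ (u := (y, z)) yz bc).
by exists m.+1; apply: hits_step (glued_policy_gt0 xy yz ndiag Pab bc) hits_m.
Qed.

Lemma sim_trans x y z : sim x y -> sim y z -> sim x z.
Proof.
move=> xy yz; apply: (reaches_sim policy_glued (u := (x, z))).
apply: (reaches_diag_as_closed policy_glued glued_policy_closed); last by exists y.
move=> [a c] [b [ab bc]]; have [n hits_n] := sim_policy_hits (u := (a, b)) ab.
exact: hits_diag_glued hits_n ab bc.
Qed.

Lemma sim_policy_path s t : sim s t -> exists n (p : nat -> pair),
  [/\ p 0%N = (s, t), diagS (p n) & supports_path sim_policy sim n p].
Proof.
move=> st; have [n hits_n] := sim_policy_hits (u := (s, t)) st.
have [m [p [p0 pm pP]]] := hits_diag_path hits_n.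
have sim_p i : (i <= m)%N -> sim (p i).1 (p i).2.
  elim: i => [_|i IH lt_im]; first by rewrite p0.
  exact: sim_policy_succ (IH (ltnW lt_im)) (pP i lt_im).
exists m, p; split=> //; split=> // i le_im; split; first exact: sim_p.
by move=> v; apply: sim_policy_succ (sim_p i le_im).
Qed.

End RobustBisimilarity.

Theorem proposition3 (R : realType) (S : finType) (L : finType)
  (tau : S -> S -> R) (ell : S -> L)
  (tau_distr : forall s, is_distr (tau s))
  (two_labels : exists s t, ell s <> ell t) :
  robust_bisimulation tau ell (robust_bisimilar tau ell).
Proof.
split; last first.
  move=> s t st; exists (sim_policy ell tau_distr); split; first exact: policy_sim.
  have [n [p [p0 pn supp]]] := sim_policy_path tau_distr st.
  by exists n, p.
split.
  split; first exact: sim_refl.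
  by split; [exact: sim_sym | exact: sim_trans tau_distr].
move=> s t st; split; first exact: sim_label st.
exists (sim_policy ell tau_distr (s, t)); split; first exact: sim_policy_coupling.
by move=> a b; apply: (sim_policy_succ (u := (s, t))).
Qed.
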